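(* Let $M$ be a free $\mathbb{Z}$-module of rank $2g$ with basis $\{a_1, \dots, a_g, b_1, \dots, b_g\}$ and the skew-symmetric bilinear pairing $\langle \cdot, \cdot \rangle$ determined by $\langle a_{i}, b_{i} \rangle = -1$ and $\langle a_{i}, a_{j} \rangle = \langle b_{i}, b_{j} \rangle = \langle a_{i}, b_{j} \rangle = 0$ for $i < j$. Let $c_{1}, \dots, c_{2g} \in M$ with $c_{i} \equiv a_{(i + 1)/2} + \dots + a_{g} + b_{(i + 1)/2} \pmod{2M}$ for $i$ odd and $c_{i} \equiv a_{i/2 + 1} + \dots + a_{g} + b_{i/2} \pmod{2M}$ for $i$ even. Let $t_{i} = T_{c_{i}} - 1$ and let $\bar{t}_{i}$ be the reduction of $t_{i}$ modulo $2$, an element of $\mathfrak{sp}(M \otimes \mathbb{F}_{2})$, for $1 \leq i \leq 2g$. Then the set $\{\bar{t}_{i}\}_{1 \leq i \leq 2g} \cup \{[\bar{t}_{i}, \bar{t}_{j}]\}_{1 \leq i < j \leq 2g}$ is an $\mathbb{F}_{2}$-basis of $\mathfrak{sp}(M \otimes \mathbb{F}_{2})$.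
   Context: For $c \in M$, $T_c$ is the transvection $v \mapsto v + \langle v, c\rangle c$. $\mathfrak{sp}(M\otimes\mathbb{F}_2)$ is the $\mathbb{F}_2$-Lie algebra of endomorphisms $X$ of $M\otimes\mathbb{F}_2$ with $\langle Xv, w\rangle + \langle v, Xw\rangle = 0$ for all $v,w$ (of dimension $2g^2+g$), with bracket $[X,Y]=XY-YX$. *)

From HB Require Import structures.
From mathcomp Require Import all_boot all_order all_algebra.
Set Implicit Arguments. Unset Strict Implicit. Unset Printing Implicit Defensive.
Import Order.TTheory GRing.Theory Num.Theory.
Local Open Scope ring_scope.

(* M = Z^(2g) (column vectors), coordinates indexed by 'I_(g+g):
   a_j = e_(lshift g j), b_j = e_(rshift g j) for j : 'I_g (0-based;
   paper's a_(j+1), b_(j+1)). M (x) F_2 = 'cV['F_2]_(g+g). *)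

Definition avec (R : pzRingType) (g : nat) (j : 'I_g) : 'cV[R]_(g+g) :=
  delta_mx (lshift g j) 0.
Definition bvec (R : pzRingType) (g : nat) (j : 'I_g) : 'cV[R]_(g+g) :=
  delta_mx (rshift g j) 0.

(* The skew-symmetric bilinear pairing with <a_i,b_i> = -1 and all other
   pairings of basis vectors (i<j, and hence by skew symmetry all) zero:
   <v,w> = sum_i (v_{b_i} w_{a_i} - v_{a_i} w_{b_i}). Defined over any ring;
   over 'F_2 it is the reduction of the pairing on M. *)
Definition pairing (R : pzRingType) (g : nat) (v w : 'cV[R]_(g+g)) : R :=
  \sum_(i < g) (v (rshift g i) 0 * w (lshift g i) 0
                - v (lshift g i) 0 * w (rshift g i) 0).

Definition transv (g : nat) (c v : 'cV[int]_(g+g)) : 'cV[int]_(g+g) :=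
  v + pairing v c *: c.

Definition tmx (g : nat) (c : 'cV[int]_(g+g)) : 'M[int]_(g+g) :=
  \matrix_(i, j) ((transv c (delta_mx j 0) - delta_mx j 0) i 0).

Definition tbar (g : nat) (c : 'cV[int]_(g+g)) : 'M['F_2]_(g+g) :=
  map_mx (fun z : int => z%:~R) (tmx c).

Definition sp (g : nat) (X : 'M['F_2]_(g+g)) : Prop :=
  forall v w : 'cV['F_2]_(g+g), pairing (X *m v) w + pairing v (X *m w) = 0.

Definition lie (R : pzRingType) (n : nat) (X Y : 'M[R]_n) : 'M[R]_n :=
  X *m Y - Y *m X.

(* target vector for c_i, i 1-based (1 <= i <= 2g):
   i odd : a_{(i+1)/2} + ... + a_g + b_{(i+1)/2}
   i even: a_{i/2+1} + ... + a_g + b_{i/2}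
   (a 0-based j corresponds to paper index j+1) *)
Definition ctarget (g : nat) (i : nat) : 'cV[int]_(g+g) :=
  if odd i then
    \sum_(j < g | ((i.+1)./2 <= j.+1)%N) avec _ j
      + \sum_(j < g | (j.+1 == (i.+1)./2)%N) bvec _ j
  else
    \sum_(j < g | (i./2 + 1 <= j.+1)%N) avec _ j
      + \sum_(j < g | (j.+1 == i./2)%N) bvec _ j.

Definition ltpair (n : nat) := {p : 'I_n * 'I_n | (p.1 < p.2)%N}.

Definition tfamily (R : pzRingType) (n : nat) (t : 'I_n -> 'M[R]_n)
  (x : 'I_n + ltpair n) : 'M[R]_n :=
  match x with
  | inl i => t i
  | inr p => lie (t (val p).1) (t (val p).2)
  end.

Definition is_basis_of (F : fieldType) (n : nat) (P : 'M[F]_n -> Prop)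
  (I : finType) (f : I -> 'M[F]_n) : Prop :=
  [/\ forall i, P (f i),
      forall l : I -> F, \sum_i l i *: f i = 0 -> forall i, l i = 0
    & forall X, P X -> exists l : I -> F, X = \sum_i l i *: f i].

From HB Require Import structures.
From mathcomp Require Import all_boot all_order all_algebra zify.
Set Implicit Arguments. Unset Strict Implicit. Unset Printing Implicit Defensive.
Import GRing.Theory.
Local Open Scope ring_scope.

(* Over F_2 the pairing is symmetric, with Gram matrix P = [[0,1],[1,0]], so
   t_i = c_i c_i^T P and sp is the space of X with P X symmetric.  The reduced
   c_i satisfy <c_i, c_j> = [i <> j], i.e. C^T P C = G := J - I for the matrix
   C with columns c_i; as 2g is even, G^2 = I, so C is invertible and
   L |-> C L C^T P is an isomorphism from symmetric matrices onto sp.  It maps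
   E_ii to t_i and, since G_ij = 1 for i <> j, E_ij + E_ji to [t_i, t_j]; these
   matrices form the standard basis of the symmetric matrices. *)

Lemma mxE_delta (R : pzSemiRingType) m n (A : 'M[R]_(m, n)) i j :
  A i j = (delta_mx 0 i *m A *m delta_mx j 0 : 'M_1) 0 0.
Proof. by rewrite -rowE -colE !mxE. Qed.

Lemma delta_mx_mulmx (R : comPzRingType) m n p q (A : 'M[R]_(n, p))
    (i' : 'I_m) i j (j' : 'I_q) :
  delta_mx i' i *m A *m delta_mx j j' = A i j *: delta_mx i' j'.
Proof.
rewrite -(mul_delta_mx (0 : 'I_1) i' i) -(mul_delta_mx (0 : 'I_1) j j') !mulmxA.
rewrite -2!(mulmxA (delta_mx i' 0)).
have -> : delta_mx 0 i *m A *m delta_mx j 0 = (A i j)%:M :> 'M_1.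
  by apply/matrixP => a b; rewrite !ord1 [RHS]mxE -mxE_delta.
by rewrite mul_mx_scalar -scalemxAl mul_delta_mx.
Qed.

Lemma trmx_mulmx_entry (R : comPzRingType) m n p (A : 'M[R]_(m, n))
    (P : 'M[R]_m) (B : 'M[R]_(m, p)) i j :
  (A^T *m P *m B) i j = ((col i A)^T *m P *m col j B) 0 0.
Proof. by rewrite mxE_delta !colE trmx_mul trmx_delta !mulmxA. Qed.

Lemma mulmx_delta_tr (R : comPzRingType) m n (A : 'M[R]_(m, n)) k :
  A *m delta_mx k k *m A^T = col k A *m (col k A)^T.
Proof.
rewrite -(mul_delta_mx (0 : 'I_1)) mulmxA -colE -mulmxA.
by rewrite -trmx_delta -trmx_mul -colE.
Qed.

Lemma summx_delta_col (R : pzSemiRingType) N (I : finType) (Q : pred I)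
    (f : I -> 'I_N) x :
  (\sum_(j | Q j) (delta_mx (f j) 0 : 'cV[R]_N)) x 0
  = \sum_(j | Q j) (x == f j)%:R.
Proof. by rewrite summxE; apply: eq_bigr => j _; rewrite mxE eqxx andbT. Qed.

Lemma sum_natr_eq_pred (R : pzSemiRingType) (I : finType) (Q : pred I) k :
  \sum_(j | Q j) ((k == j)%:R : R) = (Q k)%:R.
Proof.
have [Qk|nQk] := boolP (Q k).
  rewrite (bigD1 k) //= eqxx big1 ?addr0 // => j /andP[_ /negbTE].
  by rewrite eq_sym => ->.
by rewrite big1 // => j Qj; case: eqP => // kj; rewrite kj Qj in nQk.
Qed.

Lemma sum_natr_eq_mul (R : pzSemiRingType) g a (x : nat -> R) :
  (a < g)%N -> \sum_(k < g) (k == a :> nat)%:R * x k = x a.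
Proof.
move=> a_lt_g; rewrite (bigD1 (Ordinal a_lt_g)) //= eqxx mul1r.
rewrite big1 ?addr0 // => k.
by rewrite -val_eqE /= => /negbTE ->; rewrite mul0r.
Qed.

Lemma F2_pchar : 2 \in [pchar 'F_2].
Proof. exact: pchar_Fp. Qed.

Lemma F2_oppv (V : lmodType 'F_2) (v : V) : - v = v.
Proof. by rewrite -scaleN1r (oppr_pchar2 F2_pchar) scale1r. Qed.

Lemma F2_addvv (V : lmodType 'F_2) (v : V) : v + v = 0.
Proof. by rewrite -[X in X + _]F2_oppv addNr. Qed.

Lemma F2_natr_addb (a b : bool) : (a%:R + b%:R : 'F_2) = (a (+) b)%:R.
Proof. by case: a; case: b; rewrite ?addr0 ?add0r // (addrr_pchar2 F2_pchar). Qed.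

Definition offdiag_F2 n : 'M['F_2]_n := \matrix_(i, j) (i != j)%:R.

Lemma offdiag_F2_tr n : (offdiag_F2 n)^T = offdiag_F2 n.
Proof. by apply/matrixP => i j; rewrite !mxE eq_sym. Qed.

Lemma offdiag_F2_invol n : ~~ odd n -> offdiag_F2 n *m offdiag_F2 n = 1%:M.
Proof.
move=> n_even; pose J : 'M['F_2]_n := const_mx 1.
have -> : offdiag_F2 n = J + 1%:M.
  apply/matrixP => i j; rewrite !mxE.
  by case: (i =P j) => _ /=; rewrite ?addr0 ?(addrr_pchar2 F2_pchar).
have JJ : J *m J = 0.
  apply/matrixP => i j; rewrite !mxE; under eq_bigr do rewrite !mxE mulr1.
  rewrite sumr_const card_ord -(Fp_nat_mod (isT : prime 2)) modn2.
  by rewrite (negbTE n_even).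
by rewrite mulmxDl !mulmxDr JJ mulmx1 !mul1mx add0r addrA F2_addvv add0r.
Qed.

Section SymmetricBasis.

Variables (F : fieldType) (n : nat).

Definition sym_delta (x : 'I_n + ltpair n) : 'M[F]_n :=
  match x with
  | inl i => delta_mx i i
  | inr p => delta_mx (val p).1 (val p).2 + delta_mx (val p).2 (val p).1
  end.
Definition sym_row (x : 'I_n + ltpair n) : 'I_n :=
  match x with inl i => i | inr p => (val p).1 end.
Definition sym_col (x : 'I_n + ltpair n) : 'I_n :=
  match x with inl i => i | inr p => (val p).2 end.

Lemma sym_delta_entry x y : sym_delta x (sym_row y) (sym_col y) = (x == y)%:R.
Proof.
case: x => [i|[[i j] /= ij]]; case: y => [k|[[a b] /= ab]] /=; rewrite !mxE.
- by rewrite andbb eq_sym.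
- case: (a =P i) => [ea|//]; case: (b =P i) => [eb|//].
  by rewrite ea eb ltnn in ab.
- have [-> /=|_] := eqVneq k i; last by rewrite andbF !mulr0n addr0.
  by case: (i =P j) => [e|_]; [rewrite e ltnn in ij | rewrite addr0].
- have -> : (a == j) && (b == i) = false.
    apply/andP => -[/eqP ea /eqP eb]; move: ab; rewrite ea eb.
    by move=> /(ltn_trans ij); rewrite ltnn.
  rewrite addr0 (inj_eq (@inr_inj _ _)); congr ((nat_of_bool _)%:R).
  apply/idP/idP => [/andP[/eqP ea /eqP eb] | /eqP[-> ->]]; last by rewrite !eqxx.
  by apply/eqP; subst a b; rewrite (bool_irrelevance ab ij).
Qed.

Lemma sym_delta_sum_entry (l : 'I_n + ltpair n -> F) y :
  (\sum_x l x *: sym_delta x) (sym_row y) (sym_col y) = l y.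
Proof.
rewrite summxE (bigD1 y) //= mxE sym_delta_entry eqxx mulr1 big1 ?addr0 // => x.
by move=> /negbTE xy; rewrite mxE sym_delta_entry xy mulr0.
Qed.

Lemma sym_delta_tr x : (sym_delta x)^T = sym_delta x.
Proof. by case: x => [i|p] /=; rewrite ?linearD /= !trmx_delta // addrC. Qed.

Lemma sym_delta_basis : is_basis_of (fun L => L^T = L) sym_delta.
Proof.
split=> [|l l0 y|L L_sym]; first exact: sym_delta_tr.
  by rewrite -(sym_delta_sum_entry l y) l0 mxE.
exists (fun x => L (sym_row x) (sym_col x)); set S := \sum_x _.
have S_sym : S^T = S.
  by rewrite linear_sum; apply: eq_bigr => x _; rewrite linearZ /= sym_delta_tr.
apply/matrixP => a b; have [ab|ba|/val_inj ->] := ltngtP a b.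
- by rewrite (sym_delta_sum_entry _ (inr (exist _ (a, b) ab))).
- by rewrite -L_sym -S_sym !mxE (sym_delta_sum_entry _ (inr (exist _ (b, a) ba))).
- by rewrite (sym_delta_sum_entry _ (inl b)).
Qed.

End SymmetricBasis.

Lemma is_basis_of_linear (F : fieldType) n (P Q : 'M[F]_n -> Prop)
    (f : {linear 'M[F]_n -> 'M[F]_n}) (h : 'M[F]_n -> 'M[F]_n)
    (I : finType) (e b : I -> 'M[F]_n) :
  (forall L, P L -> Q (f L)) -> (forall L, h (f L) = L) ->
  (forall X, Q X -> P (h X) /\ f (h X) = X) ->
  (forall i, b i = f (e i)) -> is_basis_of P e -> is_basis_of Q b.
Proof.
move=> fPQ fK hQ be [eP e_free e_span].
have f_sum l : \sum_i l i *: b i = f (\sum_i l i *: e i).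
  by rewrite linear_sum; apply: eq_bigr => i _; rewrite linearZ be.
have h0 : h 0 = 0 by rewrite -[in LHS](linear0 f) fK.
split=> [i|l|X /hQ [/e_span [l hX] hK]].
- by rewrite be; apply/fPQ/eP.
- rewrite f_sum => /(congr1 h); rewrite fK h0; exact: e_free.
- by exists l; rewrite f_sum -hX.
Qed.

Section Congruence.

Variables (F : fieldType) (n : nat) (P C G : 'M[F]_n).
Hypotheses (P_sym : P^T = P) (G_sym : G^T = G).
Hypotheses (gramC : C^T *m P *m C = G) (G_invol : G *m G = 1%:M).

Definition congr_map (L : 'M[F]_n) : 'M[F]_n := C *m L *m C^T *m P.

Fact congr_map_is_linear : linear congr_map.
Proof.
by move=> a A B; rewrite /congr_map mulmxDr -scalemxAr !(mulmxDl, scalemxAl).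
Qed.

HB.instance Definition _ :=
  GRing.isLinear.Build F 'M[F]_n 'M[F]_n _ congr_map congr_map_is_linear.

Lemma congr_mapM A B : congr_map A *m congr_map B = congr_map (A *m G *m B).
Proof. by rewrite /congr_map -gramC !mulmxA. Qed.

Lemma congr_map_lie_delta i j :
  lie (congr_map (delta_mx i i)) (congr_map (delta_mx j j))
  = congr_map (G i j *: delta_mx i j - G j i *: delta_mx j i).
Proof. by rewrite /lie !congr_mapM !delta_mx_mulmx linearB. Qed.

Definition congr_unmap (X : 'M[F]_n) : 'M[F]_n := G *m C^T *m P *m X *m C *m G.

Let gram_invl : G *m C^T *m P *m C = 1%:M.
Proof. by rewrite -G_invol -{3}gramC !mulmxA. Qed.

Let gram_invr : C *m G *m C^T *m P = 1%:M.
Proof. by rewrite -!mulmxA mulmx1C // !mulmxA. Qed.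

Lemma congr_mapK L : congr_unmap (congr_map L) = L.
Proof.
rewrite /congr_unmap /congr_map !mulmxA gram_invl mul1mx -!mulmxA.
by rewrite [C^T *m _]mulmxA [C^T *m P *m _]mulmxA gramC G_invol mulmx1.
Qed.

Lemma congr_unmapK X : congr_map (congr_unmap X) = X.
Proof.
rewrite /congr_unmap /congr_map !mulmxA gram_invr mul1mx -!mulmxA.
by rewrite [C *m _]mulmxA [C *m G *m _]mulmxA gram_invr mulmx1.
Qed.

Lemma congr_map_basis (Q : 'M[F]_n -> Prop) (b : 'I_n + ltpair n -> 'M[F]_n) :
    (forall X, Q X <-> X^T *m P = P *m X) ->
    (forall x, b x = congr_map (sym_delta F x)) ->
  is_basis_of Q b.
Proof.
move=> QP be; apply: (is_basis_of_linear _ congr_mapK _ be (sym_delta_basis F n)).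
- move=> L L_sym; apply/QP.
  by rewrite /congr_map !trmx_mul !trmxK P_sym L_sym !mulmxA.
- move=> X /QP X_sym; split; last exact: congr_unmapK.
  rewrite /congr_unmap !trmx_mul !trmxK P_sym G_sym !mulmxA.
  by rewrite -(mulmxA _ X^T P) X_sym !mulmxA.
Qed.

End Congruence.

Section ReducedPairing.

Variable g : nat.

Definition pairing_mx : 'M['F_2]_(g + g) := block_mx 0 1%:M 1%:M 0.

Lemma pairing_mx_tr : pairing_mx^T = pairing_mx.
Proof. by rewrite /pairing_mx tr_block_mx !trmx0 trmx1. Qed.

Lemma pairing_F2E (v w : 'cV['F_2]_(g + g)) :
  pairing v w = (v^T *m pairing_mx *m w) 0 0.
Proof.
rewrite -[v in RHS]vsubmxK -[w in RHS]vsubmxK tr_col_mx mul_row_block mul_row_col.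
rewrite !mulmx0 !mulmx1 !add0r !addr0 /pairing !mxE -big_split /=.
by apply: eq_bigr => k _; rewrite !mxE (oppr_pchar2 F2_pchar) addrC.
Qed.

Lemma pairing_F2C (v w : 'cV['F_2]_(g + g)) : pairing v w = pairing w v.
Proof.
rewrite !pairing_F2E.
have -> : w^T *m pairing_mx *m v = (v^T *m pairing_mx *m w)^T.
  by rewrite !trmx_mul trmxK pairing_mx_tr mulmxA.
by rewrite [RHS]mxE.
Qed.

Lemma sp_F2P X : sp X <-> X^T *m pairing_mx = pairing_mx *m X.
Proof.
have formE v w : pairing (X *m v) w + pairing v (X *m w)
    = (v^T *m (X^T *m pairing_mx + pairing_mx *m X) *m w) 0 0.
  by rewrite !pairing_F2E mulmxDr mulmxDl [in RHS]mxE trmx_mul !mulmxA.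
split=> [sp_X | XP v w]; last by rewrite formE XP F2_addvv mulmx0 mul0mx mxE.
apply/eqP; rewrite -[pairing_mx *m X]F2_oppv -addr_eq0; apply/eqP/matrixP => i j.
by rewrite mxE_delta -trmx_delta -formE sp_X mxE.
Qed.

End ReducedPairing.

Definition red2 m n (A : 'M[int]_(m, n)) : 'M['F_2]_(m, n) := map_mx intr A.

Lemma red2_mod2 m n (A B D : 'M[int]_(m, n)) : A - B = D *+ 2 -> red2 A = red2 B.
Proof.
move=> /eqP; rewrite subr_eq => /eqP ->; apply/matrixP => i j.
by rewrite !mxE !rmorphD (addrr_pchar2 F2_pchar) add0r.
Qed.

Lemma pairing_map (R S : pzRingType) (f : {rmorphism R -> S}) g
    (v w : 'cV[R]_(g + g)) :
  f (pairing v w) = pairing (map_mx f v) (map_mx f w).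
Proof.
rewrite /pairing rmorph_sum; apply: eq_bigr => k _.
by rewrite rmorphB !rmorphM !mxE.
Qed.

Lemma tbarE g (c : 'cV[int]_(g + g)) :
  tbar c = red2 c *m (red2 c)^T *m pairing_mx g.
Proof.
apply/matrixP => i j; rewrite -mulmxA [RHS]mxE big_ord1.
have -> : ((red2 c)^T *m pairing_mx g) 0 j = pairing (red2 c) (delta_mx j 0).
  by rewrite pairing_F2E -colE [RHS]mxE.
rewrite pairing_F2C -(map_delta_mx intr) -pairing_map /tbar /tmx !mxE.
by rewrite addrC addKr rmorphM mulrC.
Qed.

Lemma ctarget_lshift g m (k : 'I_g) :
  ctarget g m.+1 (lshift g k) 0 = (uphalf m <= k)%:R.
Proof.
rewrite /ctarget; case: ifP => m_odd; rewrite mxE !summx_delta_col.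
all: under [X in X + _]eq_bigr do rewrite eq_lshift.
all: under [X in _ + X]eq_bigr do rewrite eq_lrshift.
all: rewrite sum_natr_eq_pred big1 // addr0; congr ((nat_of_bool _)%:R).
all: by move: m_odd; rewrite uphalfE -!divn2 /=; lia.
Qed.

Lemma ctarget_rshift g m (k : 'I_g) :
  ctarget g m.+1 (rshift g k) 0 = (k == m./2 :> nat)%:R.
Proof.
rewrite /ctarget; case: ifP => m_odd; rewrite mxE !summx_delta_col.
all: under [X in X + _]eq_bigr do rewrite eq_rlshift.
all: under [X in _ + X]eq_bigr do rewrite eq_rshift.
all: rewrite sum_natr_eq_pred big1 // add0r; congr ((nat_of_bool _)%:R).
all: by move: m_odd; rewrite -!divn2 /=; lia.
Qed.

Lemma pairing_red2_ctarget g (i j : 'I_(g + g)) :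
  pairing (red2 (ctarget g i.+1)) (red2 (ctarget g j.+1)) = (i != j)%:R.
Proof.
have half_lt (m : 'I_(g + g)) : (m./2 < g)%N.
  by move: (ltn_ord m); rewrite -divn2; lia.
rewrite /pairing; under eq_bigr do rewrite !mxE !ctarget_lshift !ctarget_rshift
  !rmorph_nat (oppr_pchar2 F2_pchar) [X in _ + X]mulrC.
rewrite big_split /= (sum_natr_eq_mul (fun k => (uphalf j <= k)%:R)) ?half_lt //.
rewrite (sum_natr_eq_mul (fun k => (uphalf i <= k)%:R)) ?half_lt // F2_natr_addb.
by congr ((nat_of_bool _)%:R); rewrite -val_eqE !uphalfE -!divn2 /=; lia.
Qed.

Theorem lemma3p2 (g : nat) (c : 'I_(g+g) -> 'cV[int]_(g+g))
  (hc : forall m : 'I_(g+g),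
      exists d : 'cV[int]_(g+g), c m - ctarget g m.+1 = d *+ 2) :
  is_basis_of (sp (g:=g)) (tfamily (fun m => tbar (c m))).
Proof.
pose C : 'M['F_2]_(g + g) := \matrix_(i, k) red2 (c k) i 0.
have colC k : col k C = red2 (c k) by apply/matrixP => i j; rewrite !mxE ord1.
have gramC : C^T *m pairing_mx g *m C = offdiag_F2 (g + g).
  apply/matrixP => i j; rewrite trmx_mulmx_entry !colC -pairing_F2E.
  have [d /red2_mod2 ->] := hc i; have [d' /red2_mod2 ->] := hc j.
  by rewrite pairing_red2_ctarget mxE.
have G_invol : offdiag_F2 (g + g) *m offdiag_F2 (g + g) = 1%:M.
  by apply: offdiag_F2_invol; rewrite addnn odd_double.
have tC k : tbar (c k) = congr_map (pairing_mx g) C (delta_mx k k).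
  by rewrite tbarE /congr_map mulmx_delta_tr colC.
apply: (congr_map_basis (pairing_mx_tr g) (offdiag_F2_tr _) gramC G_invol
  (@sp_F2P g)).
case=> [k|[[i j] /= ij]] /=; first exact: tC.
have ij' : i != j by apply: contraTneq ij => ->; rewrite ltnn.
by rewrite !tC (congr_map_lie_delta gramC) !mxE ij' eq_sym ij' !scale1r F2_oppv.
Qed.
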